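(* Suppose a unitary $C$ is written in the form $$C=H_{\mathbf a}P_{\mathbf d}Z_{\mathbf D}\,\mathbf H\,e^{\mathrm{i}\phi}X_{\mathbf u}Z_{\mathbf v}P_{\mathbf b}Z_{\mathbf B}X_{\mathbf A}$$ with $\mathbf a,\mathbf d,\mathbf u,\mathbf v,\mathbf b\in\mathbb F_2^n$, $\mathbf D,\mathbf B\in\mathcal B_n$, $\mathbf A\in GL_n(\mathbb F_2)$ and $\phi\in\{k\pi/4:k\in\mathbb Z\}$. Then for every $i\in\{0,\dots,n-1\}$, the product $P_iC$ can also be written in this form (with possibly different data of the same types).
   Context: Qubits are labelled $0,\dots,n-1$; computational basis $\{|x\rangle:x\in\mathbb F_2^n\}$; $\mathrm{i}=\sqrt{-1}$. One-qubit gates $\mathtt H=\frac1{\sqrt2}\begin{pmatrix}1&1\\1&-1\end{pmatrix}$, $\mathtt P=\mathrm{diag}(1,\mathrm{i})$, $\mathtt Z=\mathrm{diag}(1,-1)$, $\mathtt X=\begin{pmatrix}0&1\\1&0\end{pmatrix}$; $U_i$ denotes the gate $\mathtt U$ acting on qubit $i$, and $U_{\mathbf a}=\prod_iU_i^{a_i}$ for $\mathbf a\in\mathbb F_2^n$. $\mathbf H=\prod_{i=0}^{n-1}H_i$. For $\mathbf A\in GL_n(\mathbb F_2)$, $X_{\mathbf A}|x\rangle=|\mathbf Ax\rangle$. $\mathcal B_n$ is the set of symmetric $n\times n$ matrices over $\mathbb F_2$ with zero diagonal, and for $\mathbf B\in\mathcal B_n$, $Z_{\mathbf B}|x\rangle=(-1)^{\sum_{i<j}b_{ij}x_ix_j}|x\rangle$.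 *)

From mathcomp Require Import all_boot all_order all_algebra all_field.
Set Implicit Arguments. Unset Strict Implicit. Unset Printing Implicit Defensive.
Import Order.TTheory GRing.Theory Num.Theory.
Local Open Scope ring_scope.

(* Computational basis vectors x in F_2^n, as column vectors over 'F_2. *)
Definition bvec (n : nat) := 'cV['F_2]_n.

Definition dim (n : nat) : nat := #|{: bvec n}|.

(* Operators on (C^2)^{\otimes n}, as complex (algebraic) matrices whose rows
   and columns are indexed by the basis vectors |x>, x in F_2^n (via enum_val). *)
Definition op (n : nat) := 'M[algC]_(dim n).

Definition mkop (n : nat) (f : bvec n -> bvec n -> algC) : op n :=
  \matrix_(r < dim n, c < dim n) f (enum_val r) (enum_val c).

Definition sgnF2 (e : 'F_2) : algC := if e == 0 then 1 else -1.

Definition bit (n : nat) (x : bvec n) (i : 'I_n) : 'F_2 := x i 0.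

Definition Hgate (n : nat) (i : 'I_n) : op n :=
  mkop (fun x y => if [forall j, (j != i) ==> (bit x j == bit y j)]
                   then sgnF2 (bit x i * bit y i) / sqrtC 2 else 0).
Definition Pgate (n : nat) (i : 'I_n) : op n :=
  mkop (fun x y => if x == y then (if bit x i == 1 then 'i else 1) else 0).
Definition Zgate (n : nat) (i : 'I_n) : op n :=
  mkop (fun x y => if x == y then sgnF2 (bit x i) else 0).
Definition Xgate (n : nat) (i : 'I_n) : op n :=
  mkop (fun x y => if x == y + delta_mx i 0 then 1 else 0).

Definition gprod (n : nat) (U : 'I_n -> op n) (a : bvec n) : op n :=
  foldr (fun i M => (if bit a i == 1 then U i else 1%:M) *m M) 1%:M (enum 'I_n).

Definition H_ (n : nat) (a : bvec n) : op n := gprod (@Hgate n) a.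
Definition P_ (n : nat) (a : bvec n) : op n := gprod (@Pgate n) a.
Definition Z_ (n : nat) (a : bvec n) : op n := gprod (@Zgate n) a.
Definition X_ (n : nat) (a : bvec n) : op n := gprod (@Xgate n) a.

Definition Hall (n : nat) : op n := H_ (const_mx 1).

Definition XA (n : nat) (A : 'M['F_2]_n) : op n :=
  mkop (fun x y => if x == A *m y then 1 else 0).

Definition Bmat (n : nat) (B : 'M['F_2]_n) : bool :=
  (B^T == B) && [forall i, B i i == 0].

Definition ZB (n : nat) (B : 'M['F_2]_n) : op n :=
  mkop (fun x y => if x == y then
          sgnF2 (\sum_(i < n) \sum_(j < n | (i < j)%N) B i j * bit x i * bit x j)
        else 0).

(* e^{i pi/4} *)
Definition omega8 : algC := (1 + 'i) / sqrtC 2.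

Definition cliff_form (n : nat) (a d : bvec n) (D : 'M['F_2]_n) (k : int)
    (u v b : bvec n) (B A : 'M['F_2]_n) : op n :=
  H_ a *m P_ d *m ZB D *m Hall n *m (omega8 ^ k *: (X_ u *m Z_ v *m P_ b *m ZB B *m XA A)).

Definition has_cliff_form (n : nat) (C : op n) : Prop :=
  exists (a d u v b : bvec n) (D B A : 'M['F_2]_n) (k : int),
    [/\ Bmat D, Bmat B, A \in unitmx & C = cliff_form a d D k u v b B A].

From Pilot Require Import Defs.
From mathcomp Require Import all_boot all_order all_algebra all_field.
From mathcomp Require Import ring.
Set Implicit Arguments. Unset Strict Implicit. Unset Printing Implicit Defensive.
Import Order.TTheory GRing.Theory Num.Theory.
Local Open Scope ring_scope.

(* An operator is identified with its kernel <x|C|y>.  Apart from the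
   Hadamards, every factor of the normal form is a monomial matrix whose
   phases are Clifford phases s |-> e^(ik pi/4) (-1)^(v.s) i^(b.s) (-1)^(q_B(s)),
   and Clifford phases are closed under products and linear substitutions
   s |-> N s.  Hence having the normal form means having a kernel
   2^(-n/2) sum_w <x|H_a|w> f(w) (-1)^(w.(Ay+u)) g(Ay) with Clifford phases
   f, g and A invertible.  Multiplying by P_i on the left multiplies the
   kernel by i^(x_i).  If qubit i carries no Hadamard in H_a then x_i = w_i
   and this factor joins f.  Otherwise, summing over w_i explicitly turns it
   into phases in w and in t = Ay + u, together with the change of variables
   t |-> t + t_i D e_i, an involution because D_ii = 0, which is absorbed
   into A and u; if moreover d_i = 1, the Hadamard on qubit i cancels. *)

Lemma F2_cases (p : 'F_2) : p = 0 \/ p = 1.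
Proof. by case: p => [[|[|m]] //= lt_p2]; [left | right]; apply: val_inj. Qed.

Lemma F2_pchar : 2%N \in [pchar 'F_2].
Proof. exact: pchar_Fp. Qed.

Lemma sum_F2 (V : nmodType) (F : 'F_2 -> V) : \sum_p F p = F 0 + F 1.
Proof.
rewrite (bigD1 0) //= (bigD1 1) //= big1 ?addr0 // => p /andP [p0 p1].
by case: (F2_cases p) p0 p1 => ->.
Qed.

Lemma sum_delta (R : pzSemiRingType) (I : finType) (i : I) (F : I -> R) :
  \sum_j (j == i)%:R * F j = F i.
Proof. by rewrite (bigD1 i) //= eqxx mul1r big1 ?addr0 // => j /negbTE ->; rewrite mul0r. Qed.

Lemma prod_nat_forall (R : comPzSemiRingType) (I : finType) (P Q : pred I) :
  \prod_(j | P j) ((Q j)%:R : R) = [forall j, P j ==> Q j]%:R.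
Proof.
case: forallP => [PQ | /forallP]; first by rewrite big1 // => j /(implyP (PQ j)) ->.
rewrite negb_forall => /existsP [j]; rewrite negb_imply => /andP [Pj /negbTE Qj].
by rewrite (bigD1 j) //= Qj mul0r.
Qed.

Definition ipow (p : 'F_2) : algC := if p == 1 then 'i else 1.
Definition mipow (p : 'F_2) : algC := ipow p * sgnF2 p.

Lemma sgnF2D (p q : 'F_2) : sgnF2 (p + q) = sgnF2 p * sgnF2 q.
Proof.
by rewrite /sgnF2; case: (F2_cases p) => ->; case: (F2_cases q) => ->;
  rewrite ?mul1r ?mulr1 ?mulrNN ?mulr1.
Qed.

Lemma sgnF20 : sgnF2 0 = 1.
Proof. by []. Qed.

Lemma sgnF2_sum (I : finType) (P : pred I) (F : I -> 'F_2) :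
  sgnF2 (\sum_(j | P j) F j) = \prod_(j | P j) sgnF2 (F j).
Proof. exact: (big_morph sgnF2 sgnF2D). Qed.

Lemma ipowD (p q : 'F_2) : ipow (p + q) = ipow p * ipow q * sgnF2 (p * q).
Proof.
have sqri := sqrCi algC.
by rewrite /ipow /sgnF2; case: (F2_cases p) => ->; case: (F2_cases q) => ->;
  rewrite /= ?mul1r ?mulr1 ?mul0r // -expr2 sqri mulrNN mulr1.
Qed.

Lemma ipow_sum m (y : 'I_m -> 'F_2) :
  ipow (\sum_j y j) =
  \prod_j ipow (y j) * sgnF2 (\sum_(j < m) \sum_(k < m) (if (j < k)%N then y j * y k else 0)).
Proof.
elim: m y => [|m IHm] y; first by rewrite !big_ord0 mul1r.
rewrite [in LHS]big_ord_recr ipowD IHm big_ord_recr /= big_ord_recr /=.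
rewrite [X in _ + X]big1 => [|k _]; last by rewrite ltnNge -ltnS ltn_ord.
have splitE i : \sum_(k < m.+1) (if (widen_ord (leqnSn m) i < k)%N
      then y (widen_ord (leqnSn m) i) * y k else 0) =
    \sum_(k < m) (if (i < k)%N then y (widen_ord (leqnSn m) i) * y (widen_ord (leqnSn m) k)
      else 0) + y (widen_ord (leqnSn m) i) * y ord_max.
  by rewrite big_ord_recr /= ltn_ord.
rewrite (eq_bigr _ (fun i _ => splitE i)).
by rewrite addr0 big_split sgnF2D mulr_suml /=; ring.
Qed.

Lemma sgnF2M_ipow (p q : 'F_2) : sgnF2 (p * q) = ipow (p + q) * mipow p * mipow q.
Proof.
have sqri := sqrCi algC.
by rewrite /mipow /ipow /sgnF2; case: (F2_cases p) => ->; case: (F2_cases q) => ->;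
  rewrite /=; ring: sqri.
Qed.

Lemma omega8_sqr : omega8 ^+ 2 = 'i.
Proof.
have sqri := sqrCi algC.
have sqrt2_sqr : sqrtC 2 ^+ 2 = 2 :> algC by rewrite sqrtCK.
have sqrt2_neq0 : sqrtC 2 != 0 :> algC by rewrite sqrtC_eq0 pnatr_eq0.
by rewrite /omega8 exprMn exprVn sqrt2_sqr; field: sqri.
Qed.

Lemma omega8_neq0 : omega8 != 0.
Proof. by apply: contra_eqN omega8_sqr => /eqP ->; rewrite expr0n /= eq_sym neq0Ci. Qed.

Section Kernels.
Variable n : nat.
Implicit Types (x y z w s t : bvec n).

Lemma sum_enum_val (F : bvec n -> algC) :
  \sum_(r < Defs.dim n) F (enum_val r) = \sum_z F z.
Proof.
rewrite (reindex (@enum_val _ (pred_of_simpl (pred_of_argType (bvec n))))) //.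
by apply: onW_bij; exists enum_rank; [apply: enum_valK | apply: enum_rankK].
Qed.

Lemma eq_mkop (f g : bvec n -> bvec n -> algC) :
  (forall x y, f x y = g x y) -> mkop f = mkop g.
Proof. by move=> fg; apply/matrixP => r c; rewrite !mxE fg. Qed.

Lemma mkop_mul f g :
  mkop f *m mkop g = mkop (fun x y => \sum_z f x z * g z y).
Proof.
apply/matrixP => r c; rewrite !mxE -(sum_enum_val (fun z => f _ z * g z _)).
by apply: eq_bigr => z _; rewrite !mxE.
Qed.

Lemma scale_mkop (c : algC) f : c *: mkop f = mkop (fun x y => c * f x y).
Proof. by apply/matrixP => r r'; rewrite !mxE. Qed.

Lemma mkop1 : 1%:M = mkop (fun x y => (x == y)%:R) :> op n.
Proof. by apply/matrixP => r c; rewrite !mxE (inj_eq enum_val_inj). Qed.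

Lemma bvec_eqE x y : (x == y) = [forall j, x j 0 == y j 0].
Proof.
apply/eqP/forallP => [-> // | xy]; apply/matrixP => j k.
by rewrite (ord1 k); apply/eqP.
Qed.

Lemma bvec_eq_at x y i :
  (x == y) = [forall j, (j != i) ==> (x j 0 == y j 0)] && (x i 0 == y i 0).
Proof.
rewrite bvec_eqE; apply/forallP/andP => [xy | [/forallP xy xyi] j].
  by split; [apply/forallP => j; apply/implyP | ].
by case: (eqVneq j i) => [-> // | /(implyP (xy j))].
Qed.

Definition tensorop (F : 'I_n -> 'F_2 -> 'F_2 -> algC) : op n :=
  mkop (fun x y => \prod_j F j (x j 0) (y j 0)).

Lemma eq_tensorop F G : (forall j p q, F j p q = G j p q) -> tensorop F = tensorop G.
Proof. by move=> FG; apply: eq_mkop => x y; apply: eq_bigr => j _; rewrite FG. Qed.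

Lemma tensorop_mul F G :
  tensorop F *m tensorop G = tensorop (fun j p q => \sum_r F j p r * G j r q).
Proof.
rewrite mkop_mul; apply: eq_mkop => x y; rewrite bigA_distr_bigA /=.
rewrite (reindex (fun f : {ffun 'I_n -> 'F_2} => \col_j f j)) /=; last first.
  apply: onW_bij; exists (fun z : bvec n => [ffun j => z j 0]).
    by move=> f; apply/ffunP => j; rewrite ffunE mxE.
  by move=> z; apply/matrixP => j k; rewrite mxE ffunE (ord1 k).
by apply: eq_bigr => f _; rewrite -big_split; apply: eq_bigr => j _; rewrite !mxE.
Qed.

Definition kid (p q : 'F_2) : algC := (p == q)%:R.
Definition kH (p q : 'F_2) : algC := sgnF2 (p * q) / sqrtC 2.
Definition kP (p q : 'F_2) : algC := kid p q * ipow p.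
Definition kZ (p q : 'F_2) : algC := kid p q * sgnF2 p.
Definition kX (p q : 'F_2) : algC := kid p (q + 1).

Lemma sum_kid_l p (F : 'F_2 -> algC) : \sum_r kid p r * F r = F p.
Proof. by rewrite -[RHS](sum_delta p); apply: eq_bigr => r _; rewrite /kid eq_sym. Qed.

Lemma sum_kid_r q (F : 'F_2 -> algC) : \sum_r F r * kid r q = F q.
Proof. by rewrite -[RHS](sum_delta q); apply: eq_bigr => r _; rewrite mulrC. Qed.

Lemma prod_kid x y : \prod_j kid (x j 0) (y j 0) = (x == y)%:R.
Proof. by rewrite prod_nat_forall bvec_eqE. Qed.

Lemma tensorop_kid : tensorop (fun _ => kid) = 1%:M.
Proof. by rewrite mkop1; apply: eq_mkop => x y; rewrite prod_kid. Qed.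

Lemma tensorop_at i (u : 'F_2 -> 'F_2 -> algC) :
  tensorop (fun j => if j == i then u else kid) =
  mkop (fun x y => [forall j, (j != i) ==> (x j 0 == y j 0)]%:R * u (x i 0) (y i 0)).
Proof.
apply: eq_mkop => x y; rewrite (bigD1 i) //= eqxx mulrC -prod_nat_forall.
by congr (_ * _); apply: eq_bigr => j /negbTE ->.
Qed.

Lemma Hgate_tensor i : Hgate i = tensorop (fun j => if j == i then kH else kid).
Proof.
rewrite tensorop_at; apply: eq_mkop => x y.
by case: forallP => _; rewrite ?mul1r ?mul0r.
Qed.

Lemma Pgate_tensor i : Pgate i = tensorop (fun j => if j == i then kP else kid).
Proof.
rewrite tensorop_at; apply: eq_mkop => x y; rewrite (bvec_eq_at x y i) /kP /kid /bit.
by case: forallP => _; case: eqP => [-> |]; rewrite /= ?mul1r ?mul0r.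
Qed.

Lemma Zgate_tensor i : Zgate i = tensorop (fun j => if j == i then kZ else kid).
Proof.
rewrite tensorop_at; apply: eq_mkop => x y; rewrite (bvec_eq_at x y i) /kZ /kid /bit.
by case: forallP => _; case: eqP => [-> |]; rewrite /= ?mul1r ?mul0r.
Qed.

Lemma Xgate_tensor i : Xgate i = tensorop (fun j => if j == i then kX else kid).
Proof.
rewrite tensorop_at; apply: eq_mkop => x y.
rewrite (bvec_eq_at _ _ i) !mxE eqxx /= /kX /kid.
have -> : [forall j, (j != i) ==> (x j 0 == (y + delta_mx i 0) j 0)] =
          [forall j, (j != i) ==> (x j 0 == y j 0)].
  by apply: eq_forallb => j; case: (eqVneq j i) => //= ji; rewrite !mxE (negbTE ji) addr0.
by case: forallP => _; case: eqP; rewrite /= ?mul1r ?mul0r.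
Qed.

Lemma gprod_tensor (U : 'I_n -> op n) (u : 'I_n -> 'F_2 -> 'F_2 -> algC) a :
  (forall i, U i = tensorop (fun j => if j == i then u i else kid)) ->
  gprod U a = tensorop (fun j => if a j 0 == 1 then u j else kid).
Proof.
move=> Ui; rewrite /gprod.
suff foldE (r : seq 'I_n) : uniq r ->
    foldr (fun i M => (if bit a i == 1 then U i else 1%:M) *m M) 1%:M r =
    tensorop (fun j => if (j \in r) && (a j 0 == 1) then u j else kid).
  by rewrite foldE ?enum_uniq //; apply: eq_tensorop => j p q; rewrite mem_enum.
elim: r => [_ | j r IHr /andP [jr ur]] /=; first by rewrite -tensorop_kid.
rewrite IHr // /bit; case: ifP => aj; rewrite ?Ui -?tensorop_kid tensorop_mul;
  apply: eq_tensorop => l p q; rewrite in_cons; case: (eqVneq l j) => [-> | lj] /=.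
- by rewrite (negbTE jr) aj sum_kid_r.
- by rewrite sum_kid_l.
- by rewrite aj andbF sum_kid_l.
- by rewrite sum_kid_l.
Qed.

Definition diagop (f : bvec n -> algC) : op n := mkop (fun x y => (x == y)%:R * f x).

Lemma diagop_mul f g : diagop f *m diagop g = diagop (fun x => f x * g x).
Proof.
rewrite mkop_mul; apply: eq_mkop => x y.
under eq_bigr do rewrite mulrA (mulrC _ (_ == y)%:R) -!mulrA.
by rewrite sum_delta; case: eqP => [-> |]; rewrite ?mul1r ?mul0r.
Qed.

Lemma mkop_diag_mul K g : mkop K *m diagop g = mkop (fun x y => K x y * g y).
Proof.
rewrite mkop_mul; apply: eq_mkop => x y.
under eq_bigr do rewrite mulrA (mulrC _ (_ == y)%:R) -mulrA.
exact: sum_delta.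
Qed.

Lemma diag_mkop_mul f K : diagop f *m mkop K = mkop (fun x y => f x * K x y).
Proof.
rewrite mkop_mul; apply: eq_mkop => x y.
under eq_bigr do rewrite eq_sym -mulrA.
exact: sum_delta.
Qed.

Lemma mkop_graph_mul K (F : bvec n -> bvec n) (G : bvec n -> algC) :
  mkop K *m mkop (fun z y => (z == F y)%:R * G y) = mkop (fun x y => K x (F y) * G y).
Proof.
rewrite mkop_mul; apply: eq_mkop => x y.
under eq_bigr do rewrite mulrCA.
by rewrite sum_delta mulrC.
Qed.

End Kernels.

Section CliffordKernel.
Variable n : nat.
Implicit Types (x y z w s t a b d u v : bvec n) (A B D : 'M['F_2]_n).

Definition dotv s t : 'F_2 := \sum_j s j 0 * t j 0.

Definition qf B s : 'F_2 := \sum_(i < n) \sum_(j < n | (i < j)%N) B i j * s i 0 * s j 0.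

(* The diagonal entry at |s> of e^(i k pi/4) Z_v P_b Z_B. *)
Definition phase (k : int) v b B s : algC :=
  omega8 ^ k * (sgnF2 (dotv v s) * (\prod_j ipow (b j 0 * s j 0) * sgnF2 (qf B s))).

Definition hker a x w : algC := \prod_j (if a j 0 == 1 then kH else kid) (x j 0) (w j 0).

Definition hnorm : algC := (sqrtC 2)^-1 ^+ n.

Definition ckern a (f : bvec n -> algC) A u (g : bvec n -> algC) x y : algC :=
  \sum_w hker a x w * f w * sgnF2 (dotv w (A *m y + u)) * g (A *m y).

Lemma dotv0l s : dotv 0 s = 0.
Proof. by rewrite /dotv big1 // => j _; rewrite mxE mul0r. Qed.

Lemma dotvC s t : dotv s t = dotv t s.
Proof. by apply: eq_bigr => j _; rewrite mulrC. Qed.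

Lemma dotvDl s t w : dotv (s + t) w = dotv s w + dotv t w.
Proof. by rewrite /dotv -big_split; apply: eq_bigr => j _; rewrite mxE mulrDl. Qed.

Lemma dotvDr w s t : dotv w (s + t) = dotv w s + dotv w t.
Proof. by rewrite dotvC dotvDl !(dotvC _ w). Qed.

Lemma dotvZl (c : 'F_2) s t : dotv (c *: s) t = c * dotv s t.
Proof. by rewrite /dotv mulr_sumr; apply: eq_bigr => j _; rewrite mxE mulrA. Qed.

Lemma dotvZr (c : 'F_2) s t : dotv s (c *: t) = c * dotv s t.
Proof. by rewrite dotvC dotvZl dotvC. Qed.

Lemma dotv_delta i s : dotv (delta_mx i 0) s = s i 0.
Proof.
rewrite -[RHS](sum_delta i (fun j => s j 0)); apply: eq_bigr => j _.
by rewrite mxE eqxx andbT.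
Qed.

Lemma mulmx_dotv (N : 'M['F_2]_n) s j : (N *m s) j 0 = dotv (row j N)^T s.
Proof. by rewrite mxE; apply: eq_bigr => k _; rewrite !mxE. Qed.

Lemma Pgate_diag i : Pgate i = diagop (fun x => ipow (x i 0)).
Proof. by apply: eq_mkop => x y; case: eqP => _; rewrite ?mul1r ?mul0r. Qed.

Lemma P_diag b : P_ b = diagop (fun x => \prod_j ipow (b j 0 * x j 0)).
Proof.
rewrite /P_ (gprod_tensor (u := fun _ => kP) b (@Pgate_tensor n)).
apply: eq_mkop => x y; rewrite -prod_kid -big_split /=.
apply: eq_bigr => j _; rewrite /kP /kid.
by case: (F2_cases (b j 0)) => ->; rewrite ?mul1r ?mul0r ?mulr1.
Qed.

Lemma Z_diag v : Z_ v = diagop (fun x => sgnF2 (dotv v x)).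
Proof.
rewrite /Z_ (gprod_tensor (u := fun _ => kZ) v (@Zgate_tensor n)).
apply: eq_mkop => x y; rewrite /dotv sgnF2_sum -prod_kid -big_split /=.
apply: eq_bigr => j _; rewrite /kZ /kid.
by case: (F2_cases (v j 0)) => ->; rewrite ?mul1r ?mul0r ?mulr1.
Qed.

Lemma ZB_diag B : ZB B = diagop (fun x => sgnF2 (qf B x)).
Proof. by apply: eq_mkop => x y; case: eqP => _; rewrite ?mul1r ?mul0r. Qed.

Lemma X_mkop u : X_ u = mkop (fun x y => (x == y + u)%:R).
Proof.
rewrite /X_ (gprod_tensor (u := fun _ => kX) u (@Xgate_tensor n)).
apply: eq_mkop => x y; rewrite -prod_kid.
by apply: eq_bigr => j _; rewrite /kX /kid !mxE; case: (F2_cases (u j 0)) => ->; rewrite ?addr0.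
Qed.

Lemma H_mkop a : H_ a = mkop (hker a).
Proof. exact: (gprod_tensor a (@Hgate_tensor n)). Qed.

Lemma Hall_mkop : Hall n = mkop (fun w t => hnorm * sgnF2 (dotv w t)).
Proof.
rewrite /Hall H_mkop; apply: eq_mkop => x y.
have -> : hnorm = \prod_(j < n) (sqrtC 2)^-1 by rewrite prodr_const card_ord.
rewrite /hker /dotv sgnF2_sum -big_split.
by apply: eq_bigr => j _; rewrite mxE eqxx /kH mulrC.
Qed.

Lemma cliff_formE a d D k u v b B A :
  cliff_form a d D k u v b B A =
  mkop (fun x y => hnorm * ckern a (phase 0 0 d D) A u (phase k v b B) x y).
Proof.
have tailE : X_ u *m Z_ v *m P_ b *m ZB B *m XA A =
             mkop (fun z y => (z == A *m y + u)%:R * phase 0 v b B (A *m y)).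
  have -> : X_ u *m Z_ v *m P_ b *m ZB B *m XA A =
            X_ u *m ((Z_ v *m P_ b *m ZB B) *m XA A) by rewrite !mulmxA.
  rewrite Z_diag P_diag ZB_diag !diagop_mul diag_mkop_mul X_mkop mkop_mul.
  apply: eq_mkop => x y; rewrite (bigD1 (A *m y)) //= eqxx [X in _ + X]big1 ?addr0;
    last by move=> z /negbTE ->; rewrite !mulr0.
  by rewrite /phase expr0z mul1r mulr1 !mulrA.
rewrite /cliff_form -scalemxAr tailE -(mulmxA (H_ a)) P_diag ZB_diag diagop_mul H_mkop.
rewrite mkop_diag_mul Hall_mkop mkop_mul mkop_graph_mul scale_mkop.
apply: eq_mkop => x y; rewrite /ckern mulr_suml !mulr_sumr; apply: eq_bigr => w _.
by rewrite /phase dotv0l expr0z !mul1r; ring.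
Qed.

End CliffordKernel.

Section CliffordPhases.
Variable n : nat.
Implicit Types (s : bvec n) (f g : bvec n -> algC).

Definition is_phase f :=
  exists k (v b : bvec n) (B : 'M['F_2]_n), forall s, f s = phase k v b B s.

Lemma eq_is_phase f g : (forall s, f s = g s) -> is_phase f -> is_phase g.
Proof. by move=> fg [k [v [b [B fE]]]]; exists k, v, b, B => s; rewrite -fg. Qed.

Lemma is_phase_phase k (v b : bvec n) B : is_phase (phase k v b B).
Proof. by exists k, v, b, B. Qed.

Lemma phase_linear k (v : bvec n) s : phase k v 0 0 s = omega8 ^ k * sgnF2 (dotv v s).
Proof.
rewrite /phase big1 => [|j _]; last by rewrite mxE mul0r.
rewrite /qf big1 ?mul1r ?mulr1 // => j _.
by rewrite big1 // => l _; rewrite mxE !mul0r.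
Qed.

Lemma qfD (B1 B2 : 'M['F_2]_n) s : qf (B1 + B2) s = qf B1 s + qf B2 s.
Proof.
rewrite /qf -big_split; apply: eq_bigr => j _; rewrite -big_split.
by apply: eq_bigr => l _; rewrite mxE !mulrDl.
Qed.

Lemma is_phaseM f g : is_phase f -> is_phase g -> is_phase (fun s => f s * g s).
Proof.
move=> [k1 [v1 [b1 [B1 fE]]]] [k2 [v2 [b2 [B2 gE]]]].
(* i^p i^q = i^(p+q) (-1)^(pq) moves the cross term b1 b2 into the Z part. *)
exists (k1 + k2), (v1 + v2 + \col_j (b1 j 0 * b2 j 0)), (b1 + b2), (B1 + B2) => s.
rewrite fE gE /phase (expfzDr _ _ omega8_neq0) !dotvDl !sgnF2D qfD sgnF2D.
have ipow_cross : sgnF2 (dotv (\col_j (b1 j 0 * b2 j 0)) s) *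
    \prod_j ipow ((b1 + b2) j 0 * s j 0) =
    \prod_j ipow (b1 j 0 * s j 0) * \prod_j ipow (b2 j 0 * s j 0).
  rewrite /dotv sgnF2_sum -!big_split; apply: eq_bigr => j _ /=.
  have sqri := sqrCi algC.
  rewrite !mxE; case: (F2_cases (b1 j 0)) => ->; case: (F2_cases (b2 j 0)) => ->;
    case: (F2_cases (s j 0)) => ->; rewrite /ipow /sgnF2 /=; ring: sqri.
by ring: ipow_cross.
Qed.

Lemma is_phase_omega k : is_phase (fun _ => omega8 ^ k).
Proof.
apply: eq_is_phase (is_phase_phase k 0 0 0) => s.
by rewrite phase_linear dotv0l mulr1.
Qed.

Lemma is_phase_sgnF2_dotv (v : bvec n) : is_phase (fun s => sgnF2 (dotv v s)).
Proof.
apply: eq_is_phase (is_phase_phase 0 v 0 0) => s.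
by rewrite phase_linear expr0z mul1r.
Qed.

Lemma is_phase_ipow_dotv (c : bvec n) : is_phase (fun s => ipow (dotv c s)).
Proof.
exists 0, 0, c, (\matrix_(j, l) (c j 0 * c l 0)) => s.
rewrite /phase expr0z dotv0l mul1r mul1r /dotv ipow_sum; congr (_ * sgnF2 _).
apply: eq_bigr => j _; rewrite [RHS]big_mkcond /=; apply: eq_bigr => l _.
by case: ifP => // _; rewrite mxE; ring.
Qed.

Lemma is_phase_sgnF2 p : is_phase (fun _ => sgnF2 p).
Proof.
have omega8_4 : omega8 ^ 4%:Z = -1 by rewrite -exprnP (exprM _ 2 2) omega8_sqr sqrCi.
case: (F2_cases p) => ->; first exact: eq_is_phase (is_phase_omega 0).
by apply: eq_is_phase (is_phase_omega 4) => s; rewrite omega8_4.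
Qed.

Lemma is_phase_ipow p : is_phase (fun _ => ipow p).
Proof.
case: (F2_cases p) => ->; first exact: eq_is_phase (is_phase_omega 0).
by apply: eq_is_phase (is_phase_omega 2) => s; rewrite -exprnP omega8_sqr.
Qed.

Lemma is_phase_sgnF2_dotvM (c e : bvec n) :
  is_phase (fun s => sgnF2 (dotv c s * dotv e s)).
Proof.
have mipow_dotv h : is_phase (fun s => mipow (dotv h s)).
  exact: is_phaseM (is_phase_ipow_dotv h) (is_phase_sgnF2_dotv h).
apply: eq_is_phase (is_phaseM (is_phaseM (is_phase_ipow_dotv (c + e))
  (mipow_dotv c)) (mipow_dotv e)) => s.
by rewrite sgnF2M_ipow dotvDl.
Qed.

Lemma is_phase_prod (I : Type) (r : seq I) (P : pred I) (F : I -> bvec n -> algC) :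
  (forall j, is_phase (F j)) -> is_phase (fun s => \prod_(j <- r | P j) F j s).
Proof.
move=> phF; elim: r => [|j r IHr].
  by apply: eq_is_phase (is_phase_omega 0) => s; rewrite big_nil.
case Pj: (P j); last by apply: eq_is_phase IHr => s; rewrite big_cons Pj.
by apply: eq_is_phase (is_phaseM (phF j) IHr) => s; rewrite big_cons Pj.
Qed.

Lemma is_phase_comp g (N : 'M['F_2]_n) : is_phase g -> is_phase (fun s => g (N *m s)).
Proof.
move=> [k [v [b [B gE]]]].
have compE s : g (N *m s) =
    omega8 ^ k * (\prod_j sgnF2 (dotv (v j 0 *: (row j N)^T) s) *
    (\prod_j ipow (dotv (b j 0 *: (row j N)^T) s) *
     \prod_(j < n) \prod_(l < n | (j < l)%N)
       sgnF2 (dotv (B j l *: (row j N)^T) s * dotv (row l N)^T s))).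
  rewrite gE /phase {1}/dotv /qf !sgnF2_sum.
  congr (_ * (_ * (_ * _))); apply: eq_bigr => j _.
  - by rewrite dotvZl mulmx_dotv.
  - by rewrite dotvZl mulmx_dotv.
  by rewrite sgnF2_sum; apply: eq_bigr => l _; rewrite dotvZl !mulmx_dotv.
apply: eq_is_phase (fun s => esym (compE s)) _.
apply: is_phaseM; first exact: is_phase_omega.
apply: is_phaseM; first by apply: is_phase_prod => j; apply: is_phase_sgnF2_dotv.
apply: is_phaseM; first by apply: is_phase_prod => j; apply: is_phase_ipow_dotv.
by apply: is_phase_prod => j; apply: is_phase_prod => l; apply: is_phase_sgnF2_dotvM.
Qed.

Lemma is_phase_ipow_affine (c : bvec n) p : is_phase (fun s => ipow (dotv c s + p)).
Proof.
apply: eq_is_phase (is_phaseM (is_phaseM (is_phase_ipow_dotv c) (is_phase_ipow p))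
  (is_phase_sgnF2_dotv (p *: c))) => s.
by rewrite ipowD dotvZl (mulrC p).
Qed.

Lemma is_phase_mipow_affine (c : bvec n) p : is_phase (fun s => mipow (dotv c s + p)).
Proof.
apply: eq_is_phase (is_phaseM (is_phase_ipow_affine c p)
  (is_phaseM (is_phase_sgnF2_dotv c) (is_phase_sgnF2 p))) => s.
by rewrite /mipow sgnF2D.
Qed.

(* qf B only reads the strict upper triangle of B. *)
Definition symz (B : 'M['F_2]_n) : 'M['F_2]_n :=
  \matrix_(j, l) (if (j < l)%N then B j l else if (l < j)%N then B l j else 0).

Lemma Bmat_symz B : Bmat (symz B).
Proof.
apply/andP; split; last by apply/forallP => j; rewrite mxE ltnn.
by apply/eqP/matrixP => j l; rewrite !mxE; case: ltngtP.
Qed.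

Lemma qf_symz B s : qf (symz B) s = qf B s.
Proof. by apply: eq_bigr => j _; apply: eq_bigr => l jl; rewrite mxE jl. Qed.

Lemma has_cliff_form_ckern a f (A : 'M['F_2]_n) u g :
  A \in unitmx -> is_phase f -> is_phase g ->
  has_cliff_form (mkop (fun x y => hnorm n * ckern a f A u g x y)).
Proof.
move=> unitA [kf [vf [d [D fE]]]] [kg [vg [bg [B gE]]]].
(* The Z_v part of f is absorbed into the shift u. *)
exists a, d, (u + vf), vg, bg, (symz D), (symz B), A, (kf + kg).
split; rewrite ?Bmat_symz // cliff_formE; apply: eq_mkop => x y; congr (_ * _).
apply: eq_bigr => w _; rewrite fE gE /phase !qf_symz dotv0l expr0z sgnF20.
rewrite addrA (dotvDr w (A *m y + u)) sgnF2D (dotvC w vf) (expfzDr _ _ omega8_neq0).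
by ring.
Qed.

End CliffordPhases.

Section BitFlips.
Variable n : nat.
Implicit Types (w s t : bvec n) (D : 'M['F_2]_n) (i : 'I_n).

Definition set_bit w i (p : 'F_2) : bvec n := \col_j (if j == i then p else w j 0).

Lemma set_bitE w i p j : set_bit w i p j 0 = if j == i then p else w j 0.
Proof. by rewrite mxE. Qed.

Lemma set_bit_set_bit w i p q : set_bit (set_bit w i q) i p = set_bit w i p.
Proof. by apply/matrixP => j k; rewrite !mxE; case: eqP. Qed.

Lemma set_bit_id w i : set_bit w i (w i 0) = w.
Proof. by apply/matrixP => j k; rewrite !mxE (ord1 k); case: eqP => [-> |]. Qed.

Lemma set_bit_delta w i p : set_bit w i p = set_bit w i 0 + p *: delta_mx i 0.
Proof.
apply/matrixP => j k; rewrite (ord1 k) !mxE eqxx andbT.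
by case: eqP; rewrite ?add0r ?mulr1 ?mulr0 ?addr0.
Qed.

Lemma dotv_set_bit w i p t : dotv (set_bit w i p) t = dotv (set_bit w i 0) t + p * t i 0.
Proof. by rewrite set_bit_delta dotvDl dotvZl dotv_delta. Qed.

Lemma Bmat_diag D i : Bmat D -> D i i = 0.
Proof. by case/andP => _ /forallP/(_ i)/eqP. Qed.

Lemma qf_polar D s t : Bmat D -> qf D (s + t) = qf D s + qf D t + dotv s (D *m t).
Proof.
move=> /andP [/eqP Dsym /forallP Ddiag].
have DjlE j l : D l j = D j l by rewrite -[in RHS]Dsym mxE.
have crossE : \sum_j s j 0 * (D *m t) j 0 =
    \sum_(j < n) \sum_(l < n) (if (j < l)%N then D j l * s j 0 * t l 0 else 0) +
    \sum_(j < n) \sum_(l < n) (if (j < l)%N then D j l * t j 0 * s l 0 else 0).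
  rewrite [X in _ = _ + X]exchange_big -big_split; apply: eq_bigr => j _ /=.
  rewrite mxE mulr_sumr -big_split; apply: eq_bigr => l _ /=; rewrite DjlE.
  case: ltngtP => [_ | _ | /val_inj ->]; rewrite ?addr0 ?add0r; try ring.
  by rewrite (eqP (Ddiag l)) mul0r mulr0.
rewrite /qf /dotv crossE -!big_split; apply: eq_bigr => j _ /=.
rewrite -!big_mkcond -!big_split; apply: eq_bigr => l _ /=.
by rewrite !mxE; ring.
Qed.

Lemma qf_delta D i p : qf D (p *: delta_mx i 0) = 0.
Proof.
apply: big1 => j _; apply: big1 => l jl; rewrite !mxE !eqxx !andbT.
case: (eqVneq j i) => [ji | _]; last by rewrite mulr0 mulr0 mul0r.
by case: (eqVneq l i) => [li | _]; [move: jl; rewrite ji li ltnn | rewrite !mulr0].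
Qed.

Lemma qf_set_bit D w i p : Bmat D ->
  qf D (set_bit w i p) = qf D (set_bit w i 0) + p * dotv (set_bit w i 0) (col i D).
Proof.
by move=> BD; rewrite {1}set_bit_delta qf_polar // qf_delta addr0 -scalemxAr dotvZr colE.
Qed.

Lemma phase_set_bit d D w i p : Bmat D ->
  phase 0 0 d D (set_bit w i p) =
  phase 0 0 d D (set_bit w i 0) * ipow (d i 0 * p) *
  sgnF2 (p * dotv (set_bit w i 0) (col i D)).
Proof.
move=> BD; rewrite /phase !dotv0l expr0z sgnF20 !mul1r qf_set_bit // sgnF2D.
rewrite (bigD1 i) //= [in RHS](bigD1 i) //= !set_bitE eqxx mulr0.
have -> : \prod_(j | j != i) ipow (d j 0 * set_bit w i p j 0) =
          \prod_(j | j != i) ipow (d j 0 * set_bit w i 0 j 0).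
  by apply: eq_bigr => j /negbTE ji; rewrite !set_bitE ji.
by rewrite [ipow 0]/ipow /=; ring.
Qed.

Lemma sum_set_bit i c (F : bvec n -> algC) :
  \sum_w F w = \sum_(w : bvec n) kid c (w i 0) * \sum_p F (set_bit w i p).
Proof.
have Fw (w : bvec n) : F w = \sum_p kid (w i 0) p * F (set_bit w i p).
  by rewrite sum_kid_l set_bit_id.
under [RHS]eq_bigr do rewrite mulr_sumr.
rewrite (eq_bigr _ (fun w _ => Fw w)) exchange_big [in RHS]exchange_big.
apply: eq_bigr => p _ /=.
(* flip exchanges the slices w_i = p and w_i = c. *)
pose flip (w : bvec n) := set_bit w i (w i 0 + p + c).
have flipK : involutive flip.
  move=> w; rewrite /flip set_bit_set_bit set_bitE eqxx.
  have -> : w i 0 + p + c + p + c = w i 0.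
    by case: (F2_cases (w i 0)) => ->; case: (F2_cases p) => ->; case: (F2_cases c) => ->;
      apply/eqP.
  exact: set_bit_id.
rewrite (reindex_inj (inv_inj flipK)); apply: eq_bigr => w _.
rewrite /flip set_bit_set_bit set_bitE eqxx; congr (_ * _).
by rewrite /kid; case: (F2_cases (w i 0)) => ->; case: (F2_cases p) => ->;
  case: (F2_cases c) => ->.
Qed.

Lemma sum_hker_split a x i (F : bvec n -> algC) :
  \sum_(w : bvec n) hker a x w * F w =
  \sum_(w : bvec n) hker (set_bit a i 0) x w *
    \sum_p (if a i 0 == 1 then kH else kid) (x i 0) p * F (set_bit w i p).
Proof.
rewrite (sum_set_bit i (x i 0)); apply: eq_bigr => w _.
rewrite /hker [in RHS](bigD1 i) //= set_bitE eqxx /= -mulrA !mulr_sumr.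
apply: eq_bigr => p _; rewrite (bigD1 i) //= set_bitE eqxx.
under eq_bigr => j /negbTE ji do rewrite set_bitE ji.
under [in RHS]eq_bigr => j /negbTE ji do rewrite set_bitE ji.
by ring.
Qed.

Definition transv D i : 'M['F_2]_n := \matrix_(j, l) ((j == l)%:R + D j i * (l == i)%:R).

Lemma transv_mul D i t : transv D i *m t = t + t i 0 *: col i D.
Proof.
apply/matrixP => j k; rewrite (ord1 k) !mxE.
under eq_bigr do rewrite mxE mulrDl -mulrA.
rewrite big_split -mulr_sumr sum_delta mulrC /=; congr (_ + _).
by under eq_bigr do rewrite eq_sym; rewrite sum_delta.
Qed.

Lemma transv_mul_at D i t : D i i = 0 -> (transv D i *m t) i 0 = t i 0.
Proof. by move=> Dii; rewrite transv_mul !mxE Dii mulr0 addr0. Qed.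

Lemma transvK D i t : D i i = 0 -> transv D i *m (transv D i *m t) = t.
Proof.
move=> Dii; rewrite [in LHS]transv_mul transv_mul_at // transv_mul.
by rewrite -addrA -scalerDl (addrr_pchar2 F2_pchar) scale0r addr0.
Qed.

Lemma transv_unit D i : D i i = 0 -> transv D i \in unitmx.
Proof.
move=> Dii; suff sqr1 : transv D i *m transv D i = 1%:M by case: (mulmx1_unit sqr1).
apply/matrixP => j l.
have := congr1 (fun M : 'M_(n, 1) => M j 0) (transvK (delta_mx l 0) Dii).
by rewrite mulmxA -colE mxE => ->; rewrite !mxE eqxx andbT.
Qed.

Lemma dotv_transv D i w t :
  dotv w (transv D i *m t) = dotv w t + t i 0 * dotv w (col i D).
Proof. by rewrite transv_mul dotvDr dotvZr. Qed.

End BitFlips.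

Section PhaseGateAction.
Variable n : nat.
Implicit Types (x y w t a d u : bvec n) (A D : 'M['F_2]_n) (i : 'I_n).

Lemma ckern_Pgate_noH a f A u g i x y : a i 0 = 0 ->
  ipow (x i 0) * ckern a f A u g x y = ckern a (fun w => ipow (w i 0) * f w) A u g x y.
Proof.
move=> ai; rewrite /ckern mulr_sumr; apply: eq_bigr => w _.
have hker_at : hker a x w * ipow (x i 0) = hker a x w * ipow (w i 0).
  by rewrite /hker (bigD1 i) //= ai /= /kid; case: eqP => [-> | _]; rewrite ?mul0r.
by ring: hker_at.
Qed.

Lemma ckern_split_bit a f A u g i x y :
  ckern a f A u g x y =
  \sum_w hker (set_bit a i 0) x w * \sum_p (if a i 0 == 1 then kH else kid) (x i 0) p *
    (f (set_bit w i p) * sgnF2 (dotv (set_bit w i p) (A *m y + u)) * g (A *m y)).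
Proof.
rewrite /ckern (eq_bigr (fun w => hker a x w *
  (f w * sgnF2 (dotv w (A *m y + u)) * g (A *m y)))) => [|w _]; last by rewrite !mulrA.
exact: sum_hker_split.
Qed.

Lemma ckern_Pgate_H_noP a d D A u g i x y : Bmat D -> a i 0 = 1 -> d i 0 = 0 ->
  ipow (x i 0) * ckern a (phase 0 0 d D) A u g x y =
  ckern a (fun w => phase 0 0 d D w * ipow (dotv w (col i D)))
    (transv D i *m A) (transv D i *m u)
    (fun s => ipow ((transv D i *m s) i 0 + u i 0) * g (transv D i *m s)) x y.
Proof.
move=> BD ai di; have Dii := Bmat_diag i BD.
rewrite !(ckern_split_bit _ _ _ _ _ i) ai eqxx mulr_sumr; apply: eq_bigr => w _.
rewrite mulrCA; congr (_ * _); rewrite !sum_F2.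
rewrite -(mulmxA (transv D i) A y) -mulmxDr transvK // !dotv_transv.
rewrite (phase_set_bit _ w i 1 BD) di !(dotv_set_bit w i 1) [col i D i 0]mxE Dii !sgnF2D.
have -> : (A *m y) i 0 + u i 0 = (A *m y + u) i 0 by rewrite [RHS]mxE.
move: (x i 0) ((A *m y + u) i 0) (dotv (set_bit w i 0) (col i D)) => X T L.
have sqri := sqrCi algC.
by rewrite /kH; case: (F2_cases X) => ->; case: (F2_cases T) => ->;
  case: (F2_cases L) => ->; rewrite /ipow /sgnF2 /=; ring: sqri.
Qed.

Lemma ckern_Pgate_HP a d D A u g i x y : Bmat D -> a i 0 = 1 -> d i 0 = 1 ->
  ipow (x i 0) * ckern a (phase 0 0 d D) A u g x y =
  ckern (set_bit a i 0)
    (fun w => phase 0 0 d D w * mipow (w i 0) * mipow (dotv w (col i D)))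
    (transv D i *m A) (transv D i *m u)
    (fun s => omega8 * mipow ((transv D i *m s) i 0 + u i 0) * g (transv D i *m s)) x y.
Proof.
move=> BD ai di; have Dii := Bmat_diag i BD.
rewrite !(ckern_split_bit _ _ _ _ _ i) set_bit_set_bit set_bitE eqxx ai eqxx mulr_sumr.
apply: eq_bigr => w _; rewrite mulrCA; congr (_ * _); rewrite !sum_F2 !set_bitE eqxx.
rewrite -(mulmxA (transv D i) A y) -mulmxDr transvK // !dotv_transv.
rewrite (phase_set_bit _ w i 1 BD) di !(dotv_set_bit w i 1) [col i D i 0]mxE Dii !sgnF2D.
have -> : (A *m y) i 0 + u i 0 = (A *m y + u) i 0 by rewrite [RHS]mxE.
move: (x i 0) ((A *m y + u) i 0) (dotv (set_bit w i 0) (col i D)) => X T L.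
have sqri := sqrCi algC.
by rewrite /kH /kid /mipow /omega8; case: (F2_cases X) => ->; case: (F2_cases T) => ->;
  case: (F2_cases L) => ->; rewrite /ipow /sgnF2 /=; ring: sqri.
Qed.

Lemma Pgate_mkop_ckern a f A u g i :
  Pgate i *m mkop (fun x y => hnorm n * ckern a f A u g x y) =
  mkop (fun x y => hnorm n * (ipow (x i 0) * ckern a f A u g x y)).
Proof. by rewrite Pgate_diag diag_mkop_mul; apply: eq_mkop => x y; rewrite mulrCA. Qed.

Lemma is_phase_ipow_bit i p : is_phase (fun s : bvec n => ipow (s i 0 + p)).
Proof.
by apply: eq_is_phase (is_phase_ipow_affine (delta_mx i 0) p) => s; rewrite dotv_delta.
Qed.

Lemma Pgate_cliff_noH a f A u g i : A \in unitmx -> is_phase f -> is_phase g ->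
  a i 0 = 0 -> has_cliff_form (Pgate i *m mkop (fun x y => hnorm n * ckern a f A u g x y)).
Proof.
move=> unitA phf phg ai; rewrite Pgate_mkop_ckern.
under eq_mkop do rewrite ckern_Pgate_noH //.
apply: has_cliff_form_ckern => //; apply: is_phaseM phf.
by apply: eq_is_phase (is_phase_ipow_bit i 0) => s; rewrite addr0.
Qed.

Lemma Pgate_cliff_H_noP a d D A u g i : Bmat D -> A \in unitmx -> is_phase g ->
  a i 0 = 1 -> d i 0 = 0 ->
  has_cliff_form (Pgate i *m mkop (fun x y => hnorm n * ckern a (phase 0 0 d D) A u g x y)).
Proof.
move=> BD unitA phg ai di; rewrite Pgate_mkop_ckern.
under eq_mkop do rewrite ckern_Pgate_H_noP //.
apply: has_cliff_form_ckern.
- by rewrite unitmx_mul transv_unit ?Bmat_diag.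
- apply: is_phaseM (is_phase_phase _ _ _ _) _.
  by apply: eq_is_phase (is_phase_ipow_affine (col i D) 0) => s; rewrite addr0 dotvC.
apply: (is_phase_comp (g := fun s => ipow (s i 0 + u i 0) * g s)).
exact: is_phaseM (is_phase_ipow_bit i (u i 0)) phg.
Qed.

Lemma Pgate_cliff_HP a d D A u g i : Bmat D -> A \in unitmx -> is_phase g ->
  a i 0 = 1 -> d i 0 = 1 ->
  has_cliff_form (Pgate i *m mkop (fun x y => hnorm n * ckern a (phase 0 0 d D) A u g x y)).
Proof.
move=> BD unitA phg ai di; rewrite Pgate_mkop_ckern.
under eq_mkop do rewrite ckern_Pgate_HP //.
apply: has_cliff_form_ckern.
- by rewrite unitmx_mul transv_unit ?Bmat_diag.
- apply: is_phaseM; last first.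
    by apply: eq_is_phase (is_phase_mipow_affine (col i D) 0) => s; rewrite addr0 dotvC.
  apply: is_phaseM (is_phase_phase _ _ _ _) _.
  by apply: eq_is_phase (is_phase_mipow_affine (delta_mx i 0) 0) => s; rewrite addr0 dotv_delta.
apply: (is_phase_comp (g := fun s => omega8 * mipow (s i 0 + u i 0) * g s)).
apply: is_phaseM phg.
apply: is_phaseM; first exact: is_phase_omega 1.
by apply: eq_is_phase (is_phase_mipow_affine (delta_mx i 0) (u i 0)) => s; rewrite dotv_delta.
Qed.

End PhaseGateAction.

Unset Implicit Arguments.

Theorem lemma4p2 (n : nat) (a d u v b : bvec n) (D B A : 'M['F_2]_n) (k : int)
    (hD : Bmat D) (hB : Bmat B) (hA : A \in unitmx) (i : 'I_n) :
  has_cliff_form (Pgate i *m cliff_form a d D k u v b B A).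
Proof.
have phf := is_phase_phase 0 0 d D; have phg := is_phase_phase k v b B.
rewrite cliff_formE; case: (F2_cases (a i 0)) => ai; first exact: Pgate_cliff_noH.
by case: (F2_cases (d i 0)) => di; [exact: Pgate_cliff_H_noP | exact: Pgate_cliff_HP].
Qed.
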